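(* In the construction described in the context, at the end of the construction $k(A)\le\log t$ for every $A\in V_{cc}$; consequently every edge $e\in E$ crosses at most $2\log t$ of the complete cuts $C_G(X_1),\dots,C_G(X_{t-1})$, and in particular belongs to at most $2\log t$ of the sets $C_1,\dots,C_{t-1}$.
   Context: $\log$ denotes $\log_2$. Setting: $G=(V,E)$ is a connected finite undirected graph (parallel edges allowed), $w:E\to\mathbb{R}_{\ge0}$ edge weights, $c:E\to\mathbb{R}_{>0}$ edge costs, $n=|V|$. For $S\subseteq V$, $C_G(S)=\{e\in E:|e\cap S|=1\}$ (complete cut; its edges cross it) and $C_G(S,W)=\{e\in C_G(S):w(e)<W\}$ (partial cut). $F\subseteq E$ is a set with $G'=G\setminus F=(V,E\setminus F)$ connected; $B=c(F)$ and $\Delta=\mathrm{MST}(G')-\mathrm{MST}(G)$ (MST weights w.r.t. $w$). Construction: let $T$ be a minimum spanning tree of $G$ and $T\cap F=\{e_1,\dots,e_{t-1}\}$, with $t\ge2$. Removing these edges splits $T$ into components with vertex sets $A_1,\dots,A_t$ (a partition of $V$). Let $G'_{cc}$ be the multigraph with vertex set $V_{cc}=\{A_1,\dots,A_t\}$ having, for every edge $\{u,v\}\in E\setminus F$ with $u\in A_i$, $v\in A_j$, an edge between $A_i$ and $A_j$ of weight $w(\{u,v\})$ (identified with the original edge). Let $T'_{cc}$ be a minimum spanning tree of $G'_{cc}$, with edges $e'_1,\dots,e'_{t-1}$ indexed so that $w(e'_1)\le\dots\le w(e'_{t-1})$ (ties broken arbitrarily). For each $i$, deleting $e'_i,e'_{i+1},\dots,e'_{t-1}$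 from $T'_{cc}$ leaves a forest in which $e'_i$ joins two components $L_i,R_i\subseteq V_{cc}$. Counters $k(A)=0$ for all $A\in V_{cc}$ initially, and $k(S)=\max_{A\in S}k(A)$. For $i=1,\dots,t-1$ in order: set $X_i=L_i$ if $k(L_i)\le k(R_i)$, else $X_i=R_i$; then increase $k(A)$ by $1$ for every $A\in X_i$. Identifying a set of vertices of $G'_{cc}$ with the union of the corresponding vertex sets in $V$, define $C_i=C_G(X_i,w(e'_i))$. *)

From HB Require Import structures.
From mathcomp Require Import all_boot all_order all_algebra.
From mathcomp Require Import reals exp.
Set Implicit Arguments. Unset Strict Implicit. Unset Printing Implicit Defensive.
Import Order.TTheory GRing.Theory Num.Theory.
Local Open Scope ring_scope.

Definition log2 {R : realType} (x : R) : R := ln x / ln 2.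

Section Graphs.
Variables (Vt Et : finType) (ends : Et -> Vt * Vt).

(* x and y are joined by an edge of S (edges are undirected; parallel edges allowed) *)
Definition adj (S : {set Et}) : rel Vt :=
  fun x y => [exists e in S, (ends e == (x, y)) || (ends e == (y, x))].

Definition conn (S : {set Et}) (x y : Vt) : bool := connect (adj S) x y.

Definition connected_on (VS : {set Vt}) (S : {set Et}) : Prop :=
  {in VS &, forall x y, conn S x y}.

(* S is a spanning tree of the graph (VS, ES): S is a connected, acyclic
   (no edge of S lies on a cycle of S) subgraph spanning VS *)
Definition spanning_tree (VS : {set Vt}) (ES S : {set Et}) : Prop :=
  [/\ S \subset ES, connected_on VS S &
      {in S, forall e, ~~ conn (S :\ e) (ends e).1 (ends e).2}].

Definition is_mst {R : realType} (w : Et -> R) (VS : {set Vt}) (ES S : {set Et}) : Prop :=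
  spanning_tree VS ES S /\
  forall S', spanning_tree VS ES S' -> \sum_(e in S) w e <= \sum_(e in S') w e.

Definition cut (S : {set Vt}) : {set Et} :=
  [set e | ((ends e).1 \in S) != ((ends e).2 \in S)].

Definition pcut {R : realType} (w : Et -> R) (S : {set Vt}) (W : R) : {set Et} :=
  [set e in cut S | w e < W].
End Graphs.

Section Construction.
Variables (R : realType) (V E : finType) (ends : E -> V * V) (w : E -> R)
  (F T Tcc : {set E}) (eo : nat -> E).

Definition comp (x : V) : {set V} := [set y | conn ends (T :\: F) x y].

Definition Vcc : {set {set V}} := [set comp x | x in [set: V]].

Definition tt : nat := #|Vcc|.

(* endpoints of an edge in the contracted multigraph G'_cc *)
Definition ends_cc (e : E) : {set V} * {set V} :=
  (comp (ends e).1, comp (ends e).2).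

(* the forest T'_cc minus e'_i, ..., e'_{t-1} (0-based: edges eo j, j < i) *)
Definition forest_before (i : nat) : {set E} := [set eo j | j : 'I_i].

Definition Lc (i : nat) : {set {set V}} :=
  [set A in Vcc | conn ends_cc (forest_before i) (ends_cc (eo i)).1 A].
Definition Rc (i : nat) : {set {set V}} :=
  [set A in Vcc | conn ends_cc (forest_before i) (ends_cc (eo i)).2 A].

Definition kmax (k : {set V} -> nat) (S : {set {set V}}) : nat :=
  (\max_(A in S) k A)%N.

Definition Xsel (k : {set V} -> nat) (i : nat) : {set {set V}} :=
  if (kmax k (Lc i) <= kmax k (Rc i))%N then Lc i else Rc i.

Fixpoint kproc (n : nat) : {set V} -> nat :=
  match n with
  | 0 => fun _ => 0%N
  | n'.+1 => let k := kproc n' in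
             fun A => (k A + (A \in Xsel k n'))%N
  end.

(* X_i (0-based) as a set of components *)
Definition X (i : nat) : {set {set V}} := Xsel (kproc i) i.

Definition XV (i : nat) : {set V} := \bigcup_(A in X i) A.

Definition Ci (i : nat) : {set E} := pcut ends w (XV i) (w (eo i)).
End Construction.

(* Grow the forest T'_cc one edge at a time, in the order e'_1, e'_2, ....
   Invariant: every component C of the current forest satisfies
   2 ^ (max of k over C) <= |C|.  When e'_i merges L_i and R_i, the counters
   of the side with the smaller maximum are raised by one, so the new maximum
   is at most max(k(L_i) + 1, k(R_i)), while |L_i| + |R_i| >= 2 ^ (k(L_i) + 1)
   when k(L_i) = k(R_i).  Hence k(A) <= log |V_cc| = log t at the end.  An
   edge crossing C_G(X_i) has an endpoint whose component lies in X_i, and the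
   component A of an endpoint lies in X_i for exactly k(A) of the steps. *)
From Pilot Require Import Defs.
From HB Require Import structures.
From mathcomp Require Import all_boot all_order all_algebra.
From mathcomp Require Import reals exp.
From mathcomp Require Import zify.
Import Order.TTheory GRing.Theory Num.Theory.
Set Implicit Arguments. Unset Strict Implicit. Unset Printing Implicit Defensive.

Section Connectivity.
Variables (Vt Et : finType) (ends : Et -> Vt * Vt).
Implicit Types (S : {set Et}) (x y z : Vt).

Lemma adj_sym S : symmetric (adj ends S).
Proof.
move=> x y; apply/existsP/existsP => -[e /andP[eS /orP[]/eqP H]];
  by exists e; rewrite eS H ?eqxx ?orbT.
Qed.

Lemma conn_refl S x : conn ends S x x.
Proof. exact: connect0. Qed.

Lemma conn_trans S x y z : conn ends S x y -> conn ends S y z -> conn ends S x z.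
Proof. exact: connect_trans. Qed.

Lemma conn_sym S x y : conn ends S x y = conn ends S y x.
Proof. exact: (sym_connect_sym (adj_sym S)). Qed.

Lemma conn_subset S S' x y : S \subset S' -> conn ends S x y -> conn ends S' x y.
Proof.
move=> sSS'; apply: connect_sub => u v /existsP[e /andP[eS He]].
by apply: connect1; apply/existsP; exists e; rewrite (subsetP sSS' _ eS).
Qed.

Lemma conn_setU1 S e x z : conn ends (e |: S) x z ->
  conn ends S x z || ((conn ends S x (ends e).1 || conn ends S x (ends e).2) &&
                      (conn ends S (ends e).1 z || conn ends S (ends e).2 z)).
Proof.
case/connectP => p pth ->; elim: p x pth => [|y p IH] x /=; first by rewrite conn_refl.
case/andP => /existsP[f /andP[]]; rewrite in_setU1 => /orP[/eqP -> exy|fS fxy].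
  have ex : conn ends S x (ends e).1 || conn ends S x (ends e).2.
    by case/orP: exy => /eqP ->; rewrite conn_refl ?orbT.
  have ey : conn ends S (ends e).1 y || conn ends S (ends e).2 y.
    by case/orP: exy => /eqP ->; rewrite conn_refl ?orbT.
  move=> /IH /orP[yz|/andP[_ ->]]; last by rewrite ex orbT.
  by rewrite ex /=; case/orP: ey => ey; rewrite (conn_trans ey yz) ?orbT.
have xy : conn ends S x y by apply: connect1; apply/existsP; exists f; rewrite fS.
move=> /IH /orP[yz|/andP[/orP[] ye ->]]; first by rewrite (conn_trans xy yz).
  by rewrite (conn_trans xy ye) orbT.
by rewrite (conn_trans xy ye) !orbT.
Qed.
End Connectivity.

Section Counters.
Variable V : finType.
Implicit Types (k : {set V} -> nat) (P Q : {set {set V}}).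

Lemma kmax_leP k P m : reflect (forall B, B \in P -> k B <= m) (kmax k P <= m).
Proof. exact: bigmax_leqP. Qed.

Lemma le_kmax k P B : B \in P -> k B <= kmax k P.
Proof. exact: leq_bigmax_cond. Qed.

Lemma exp2_maxS_le_add kP kQ p q : kP <= kQ -> 2 ^ kP <= p -> 2 ^ kQ <= q ->
  2 ^ maxn kP.+1 kQ <= p + q.
Proof.
move=> kPQ hp hq; have [lt|ge] := ltnP kP kQ.
  by rewrite (maxn_idPr lt); apply: leq_trans hq (leq_addl _ _).
have eQP : kQ = kP by apply/eqP; rewrite eqn_leq ge kPQ.
by rewrite eQP (maxn_idPl (leqnSn kP)) expnS mul2n -addnn leq_add // -eQP.
Qed.

Lemma exp2_kmax_merge k P Q : [disjoint P & Q] -> kmax k P <= kmax k Q ->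
  2 ^ kmax k P <= #|P| -> 2 ^ kmax k Q <= #|Q| ->
  2 ^ kmax (fun B => k B + (B \in P)) (P :|: Q) <= #|P :|: Q|.
Proof.
move=> dPQ kPQ hP hQ; rewrite cardsU (disjoint_setI0 dPQ) cards0 subn0.
apply: leq_trans (exp2_maxS_le_add kPQ hP hQ); rewrite leq_pexp2l //.
apply/kmax_leP => B; rewrite in_setU; case: (boolP (B \in P)) => [BP _|_ /= BQ].
  by rewrite addn1 leq_max ltnS le_kmax.
by rewrite addn0 leq_max le_kmax ?orbT.
Qed.
End Counters.

Section ForestGrowth.
Variables (V E : finType) (ends : E -> V * V) (F T Tcc : {set E}) (eo : nat -> E).
Local Notation cc := (ends_cc ends F T).
Local Notation Vcc := (Vcc ends F T).
Local Notation t := (tt ends F T).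
Local Notation kp := (kproc ends F T eo).
Local Notation X := (X ends F T eo).

Hypothesis Tcc_acyclic : {in Tcc, forall e, ~~ conn cc (Tcc :\ e) (cc e).1 (cc e).2}.
Hypothesis eo_inj : forall i j, (i < j < t.-1)%N -> eo i != eo j.
Hypothesis Tcc_eo : Tcc = [set eo (nat_of_ord i) | i : 'I_(t.-1)].

Definition component n A : {set {set V}} :=
  [set B in Vcc | conn cc (forest_before eo n) A B].

Lemma forest_beforeS n : forest_before eo n.+1 = eo n |: forest_before eo n.
Proof.
apply/setP=> f; rewrite in_setU1; apply/imsetP/orP.
- case=> j _ ->; have [jn|nj] := ltnP j n.
  + by right; apply/imsetP; exists (Ordinal jn).
  + by left; have -> : nat_of_ord j = n by have := ltn_ord j; lia.
- case=> [/eqP ->|/imsetP[j _ ->]]; first by exists ord_max.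
  by exists (widen_ord (leqnSn n) j).
Qed.

Lemma ends_cc_in_Vcc e : (cc e).1 \in Vcc /\ (cc e).2 \in Vcc.
Proof. by split; apply: imset_f; rewrite inE. Qed.

Lemma mem_component n A : A \in Vcc -> A \in component n A.
Proof. by move=> AV; rewrite inE AV conn_refl. Qed.

Lemma component_subset_Vcc n A : component n A \subset Vcc.
Proof. by apply/subsetP => B; rewrite inE => /andP[]. Qed.

Lemma component_subsetS n A : component n A \subset component n.+1 A.
Proof.
apply/subsetP => B; rewrite !inE => /andP[-> /=]; apply: conn_subset.
by rewrite forest_beforeS subsetUr.
Qed.

Section Step.
Variable n : nat.
Hypothesis n_lt : (n < t.-1)%N.
Local Notation a := (cc (eo n)).1.
Local Notation b := (cc (eo n)).2.

Lemma X_step : X n = if (kmax (kp n) (component n a) <= kmax (kp n) (component n b))%N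
                     then component n a else component n b.
Proof. by []. Qed.

Lemma kprocS B : kp n.+1 B = (kp n B + (B \in X n))%N.
Proof. by []. Qed.

(* The first n edges avoid eo n, so acyclicity of T'_cc at eo n applies. *)
Lemma components_disjoint : [disjoint component n a & component n b].
Proof.
have eoT : eo n \in Tcc by rewrite Tcc_eo; apply/imsetP; exists (Ordinal n_lt).
have sub : forest_before eo n \subset Tcc :\ eo n.
  apply/subsetP => f /imsetP[j _ ->].
  have jt : (j < t.-1)%N by apply: ltn_trans n_lt.
  by rewrite in_setD1 eo_inj ?ltn_ord ?jt // Tcc_eo; apply/imsetP; exists (Ordinal jt).
rewrite disjoints_subset; apply/subsetP => B.
rewrite !inE => /andP[_ aB]; apply/negP => /andP[_ bB].
have ab : conn cc (forest_before eo n) a b by rewrite (conn_trans aB) // conn_sym.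
by move: (Tcc_acyclic eoT); rewrite (conn_subset sub ab).
Qed.

Lemma component_merge A : A \in component n a :|: component n b ->
  component n.+1 A = component n a :|: component n b.
Proof.
have ab : conn cc (forest_before eo n.+1) a b.
  by apply: connect1; apply/existsP; exists (eo n); rewrite forest_beforeS setU11 eqxx.
have from_a C : C \in component n a :|: component n b ->
    conn cc (forest_before eo n.+1) a C.
  move=> /(subsetP (setUSS (component_subsetS n a) (component_subsetS n b))).
  by rewrite !inE => /orP[]/andP[_ //]; apply: conn_trans.
move=> Aab; apply/setP => B; apply/idP/idP => [|Bab].
  rewrite inE => /andP[BV]; rewrite forest_beforeS => /conn_setU1.
  move: Aab; rewrite !inE BV /= => /orP[]/andP[_ aA] /orP[AB|/andP[_ /orP[] ->]];
    by rewrite ?orbT // (conn_trans aA AB) ?orbT.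
have BV : B \in Vcc by move: Bab; rewrite !inE => /orP[]/andP[].
by rewrite inE BV (conn_trans _ (from_a B Bab)) // conn_sym from_a.
Qed.

Lemma component_stable A : A \in Vcc -> A \notin component n a :|: component n b ->
  component n.+1 A = component n A.
Proof.
move=> AV Aab; apply/eqP; rewrite eqEsubset component_subsetS andbT.
apply/subsetP => B; rewrite !inE => /andP[-> /=]; rewrite forest_beforeS.
case/conn_setU1/orP => [//|/andP[Aab' _]]; case/negP: Aab.
by rewrite !inE AV /= !(conn_sym _ _ _ A).
Qed.

Lemma X_subset : X n \subset component n a :|: component n b.
Proof. by rewrite X_step; case: ifP => _; rewrite ?subsetUl ?subsetUr. Qed.

Lemma kmax_component_stable A : A \in Vcc -> A \notin component n a :|: component n b ->
  kmax (kp n.+1) (component n.+1 A) = kmax (kp n) (component n A).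
Proof.
move=> AV Aab; rewrite component_stable //; apply: eq_bigr => B.
rewrite inE => /andP[_ AB]; rewrite kprocS; case: (boolP (B \in X n)) => [BX|_].
  case/negP: Aab; move/(subsetP X_subset): BX; rewrite !inE AV /=.
  by case/orP=> /andP[_ xB]; rewrite (conn_trans xB) ?orbT // conn_sym.
by rewrite addn0.
Qed.

Lemma exp2_kmax_componentS :
  (forall A, A \in Vcc -> 2 ^ kmax (kp n) (component n A) <= #|component n A|) ->
  forall A, A \in Vcc -> 2 ^ kmax (kp n.+1) (component n.+1 A) <= #|component n.+1 A|.
Proof.
move=> IH A AV; have [Aab|Aab] := boolP (A \in component n a :|: component n b); last first.
  by rewrite kmax_component_stable // component_stable // IH.
have [aV bV] := ends_cc_in_Vcc (eo n).
have -> : kp n.+1 = fun B => (kp n B + (B \in X n))%N by [].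
rewrite component_merge //.
rewrite X_step; case: ifP => ab.
  by apply: exp2_kmax_merge; rewrite ?components_disjoint ?IH.
rewrite setUC; apply: exp2_kmax_merge; rewrite 1?disjoint_sym ?components_disjoint ?IH //.
by rewrite ltnW // ltnNge ab.
Qed.
End Step.

Lemma exp2_kmax_component n A : n <= t.-1 -> A \in Vcc ->
  2 ^ kmax (kp n) (component n A) <= #|component n A|.
Proof.
elim: n A => [|n IH] A n_le AV.
  rewrite (_ : kmax _ _ = 0) // ?expn0 ?card_gt0; last by apply/eqP; rewrite -leqn0; apply/kmax_leP.
  by apply/set0Pn; exists A; apply: mem_component.
by apply: exp2_kmax_componentS => // B; apply: IH; apply: ltnW.
Qed.

Lemma exp2_kproc_le_card_Vcc A : A \in Vcc -> 2 ^ kp t.-1 A <= t.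
Proof.
move=> AV; apply: leq_trans (leq_trans _ (exp2_kmax_component (leqnn _) AV)) _.
  by rewrite leq_pexp2l // le_kmax // mem_component.
exact: subset_leq_card (component_subset_Vcc _ _).
Qed.
End ForestGrowth.

Section Counting.
Variables (V E : finType) (ends : E -> V * V) (F T : {set E}) (eo : nat -> E).
Local Notation comp := (Defs.comp ends F T).
Local Notation kp := (kproc ends F T eo).
Local Notation X := (X ends F T eo).
Local Notation XV := (XV ends F T eo).

Lemma card_steps_in_X m A : #|[set i : 'I_m | A \in X i]| = kp m A.
Proof.
rewrite -sum1_card big_mkcond /=; under eq_bigr => i _ do rewrite inE.
elim: m => [|m IH]; first by rewrite big_ord0.
by rewrite big_ord_recr /= IH; case: (A \in X m).
Qed.

Lemma comp_eq x y : y \in comp x -> comp x = comp y.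
Proof.
rewrite inE => xy; apply/setP => z; rewrite !inE /conn.
by rewrite (same_connect (sym_connect_sym (adj_sym _ _)) xy).
Qed.

Lemma comp_in_X i x : x \in XV i -> comp x \in X i.
Proof.
case/bigcupP => A AX xA.
have : A \in Vcc ends F T by move: AX; rewrite /X /Xsel; case: ifP => _; rewrite inE => /andP[].
by case/imsetP => y _ Ay; move: xA AX; rewrite Ay => /comp_eq ->.
Qed.

Lemma card_cut_steps_le m e :
  #|[set i : 'I_m | e \in cut ends (XV i)]| <= kp m (comp (ends e).1) + kp m (comp (ends e).2).
Proof.
rewrite -!card_steps_in_X; apply: leq_trans (leq_card_setU _ _).
apply: subset_leq_card; apply/subsetP => i; rewrite !inE.
case: (boolP ((ends e).1 \in XV i)) => [/comp_in_X -> //|_ /=].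
by rewrite eq_sym eqbF_neg negbK => /comp_in_X ->; rewrite orbT.
Qed.
End Counting.

Local Open Scope ring_scope.

Lemma nat_le_log2 (R : realType) (k n : nat) : (2 ^ k <= n)%N -> k%:R <= log2 (n%:R : R).
Proof.
move=> kn; have n_gt0 : (0 < n)%N by apply: leq_trans kn; rewrite expn_gt0.
have ln2_gt0 : (0 : R) < ln 2 by apply: ln_gt0; rewrite ltr1n.
rewrite /log2 ler_pdivlMr // mulr_natl -lnXn ?ltr0n //.
by rewrite ler_ln ?posrE ?exprn_gt0 ?ltr0n // -natrX ler_nat.
Qed.

Theorem mainTheorem9 (R : realType) (V E : finType) (ends : E -> V * V)
  (w c : E -> R) (F T Tcc : {set E}) (eo : nat -> E) :
  (* G = (V, E) connected, w >= 0, c > 0 *)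
  connected_on ends [set: V] [set: E] ->
  (forall e, 0 <= w e) -> (forall e, 0 < c e) ->
  (* G' = G \ F connected *)
  connected_on ends [set: V] (~: F) ->
  (* T is an MST of G, and T meets F (t >= 2) *)
  is_mst ends w [set: V] [set: E] T ->
  T :&: F != set0 ->
  (* T'_cc is an MST of G'_cc *)
  is_mst (ends_cc ends F T) w (Vcc ends F T) (~: F) Tcc ->
  (* eo 0, ..., eo (t-2) enumerate T'_cc with nondecreasing weights *)
  (forall i j, (i < j < (tt ends F T).-1)%N -> eo i != eo j) ->
  Tcc = [set eo (nat_of_ord i) | i : 'I_((tt ends F T).-1)] ->
  (forall i j, (i <= j < (tt ends F T).-1)%N -> w (eo i) <= w (eo j)) ->
  let t := tt ends F T in
  (forall A, A \in Vcc ends F T ->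
     ((kproc ends F T eo t.-1 A)%:R : R) <= log2 (t%:R : R)) /\
  (forall e : E,
     (#|[set i : 'I_t.-1 | e \in cut ends (XV ends F T eo i)]|%:R : R)
       <= 2 * log2 (t%:R : R)) /\
  (forall e : E,
     (#|[set i : 'I_t.-1 | e \in Ci ends w F T eo i]|%:R : R)
       <= 2 * log2 (t%:R : R)).
Proof.
move=> _ _ _ _ _ _ [[_ _ Tcc_acyclic] _] eo_inj Tcc_eo _ t.
have k_le_log A : A \in Vcc ends F T -> (kproc ends F T eo t.-1 A)%:R <= log2 (t%:R : R).
  by move=> AV; apply/nat_le_log2/(exp2_kproc_le_card_Vcc Tcc_acyclic eo_inj Tcc_eo AV).
have cut_le e : #|[set i : 'I_t.-1 | e \in cut ends (XV ends F T eo i)]|%:R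
                <= 2 * log2 (t%:R : R).
  apply: le_trans (_ : _ <= (kproc ends F T eo t.-1 (Defs.comp ends F T (ends e).1)
                      + kproc ends F T eo t.-1 (Defs.comp ends F T (ends e).2))%:R) _.
    by rewrite ler_nat card_cut_steps_le.
  by rewrite natrD mulr2n mulrDl mul1r; apply: lerD; apply/k_le_log/imset_f; rewrite inE.
split=> //; split=> // e; apply: le_trans (cut_le e); rewrite ler_nat subset_leq_card //.
by apply/subsetP => i; rewrite !inE => /andP[].
Qed.
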